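(* Consider scheduling games on two identical machines of speed $1$ with arbitrary priority lists in which all jobs have negative deterioration (with no restriction relating $a_i$ to the machine speeds). (a) Every such game with exactly two jobs has a pure Nash equilibrium. (b) There exists such a game with three jobs that has no pure Nash equilibrium; for instance, the game with jobs $u,v,w$ with $p_u(t)=\max\{5-1.05t,0.2\}$, $p_v(t)=\max\{4-1.1t,0.2\}$, $p_w(t)=\max\{3-1.2t,0.2\}$ and priority lists $\pi_1=(v,u,w)$, $\pi_2=(w,u,v)$.
   Context: Scheduling game: a finite set $N$ of $n\ge1$ jobs (players) and a set $M$ of machines. Machine $j$ has speed $s_j>0$ and a priority list $\pi_j$, a bijection $N\to\{1,\dots,n\}$; job $u$ has higher priority than $v$ on $j$ iff $\pi_j(u)<\pi_j(v)$ (a list written $(x,y,z)$ gives $x$ the highest priority). A job with negative deterioration has processing-time function $p_i(t)=\max\{\tau_i,b_i-a_it\}$ ($b_i,a_i\ge0$, $\tau_i>0$). A profile $\sigma\in M^N$ assigns each job to a machine. On machine $j$, the jobs assigned to it, listed in increasing $\pi_j$-order as $i_1,i_2,\dots$, are processed without idle time: $S_{i_1}(\sigma)=0$, $C_{i_k}(\sigma)=S_{i_k}(\sigma)+p_{i_k}(S_{i_k}(\sigma))/s_j$, $S_{i_{k+1}}(\sigma)=C_{i_k}(\sigma)$. The cost of job $i$ is $C_i(\sigma)$. A pure Nash equilibrium (NE) is a profile in which no job can strictly decrease its completion time by unilaterally changing its machine. *)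

From HB Require Import structures.
From mathcomp Require Import all_boot all_order all_algebra.
From mathcomp Require Import reals.
Set Implicit Arguments. Unset Strict Implicit. Unset Printing Implicit Defensive.
Import Order.TTheory GRing.Theory Num.Theory.
Local Open Scope ring_scope.

Section SchedulingGame.
Variable R : realType.

Record ndjob := NDJob { nd_tau : R; nd_b : R; nd_a : R }.

Definition valid_ndjob (x : ndjob) : Prop :=
  0 < nd_tau x /\ 0 <= nd_b x /\ 0 <= nd_a x.

Definition proc_time (x : ndjob) (t : R) : R :=
  Num.max (nd_tau x) (nd_b x - nd_a x * t).

Variables (J M : finType).

(* Priority list of machine j: a bijection J -> {1,..,n}; smaller = higher priority. *)
Definition priority_list (pi : J -> nat) : Prop :=
  injective pi /\ forall k, (1 <= pi k <= #|J|)%N.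

Fixpoint completions (p : J -> R -> R) (s t : R) (l : seq J) : seq R :=
  match l with
  | [::] => [::]
  | i :: l' => let c := t + p i t / s in c :: completions p s c l'
  end.

Variables (jobs : J -> ndjob) (speed : M -> R) (pi : M -> J -> nat).

Definition machine_seq (sigma : J -> M) (j : M) : seq J :=
  sort (fun u v => (pi j u <= pi j v)%N) [seq k <- enum J | sigma k == j].

Definition completion (sigma : J -> M) (i : J) : R :=
  let l := machine_seq sigma (sigma i) in
  nth 0 (completions (fun k => proc_time (jobs k)) (speed (sigma i)) 0 l)
      (index i l).

Definition deviate (sigma : J -> M) (i : J) (j : M) : J -> M :=
  fun k => if k == i then j else sigma k.

Definition pure_NE (sigma : J -> M) : Prop :=
  forall (i : J) (j : M), ~ (completion (deviate sigma i j) i < completion sigma i).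

End SchedulingGame.

(* The three-job example: u = 0, v = 1, w = 2; machine 1 = 0, machine 2 = 1. *)
Definition ex_jobs (R : realType) (k : 'I_3) : ndjob R :=
  match nat_of_ord k with
  | 0%N => NDJob (1 / 5) 5 (21 / 20)
  | 1%N => NDJob (1 / 5) 4 (11 / 10)
  | _ => NDJob (1 / 5) 3 (6 / 5)
  end.

(* pi_1 = (v,u,w), pi_2 = (w,u,v) *)
Definition ex_pi (j : 'I_2) (k : 'I_3) : nat :=
  if nat_of_ord j == 0%N then nth 0%N [:: 2; 1; 3]%N k
  else nth 0%N [:: 2; 3; 1]%N k.

(* (a) Let the two jobs be x and y.  If on some machine j job y precedes x and
   x completes earlier queued behind y than when started alone at time 0
   (possible only because processing times shrink with the start time), then
   putting both jobs on j is an equilibrium: y cannot improve on starting at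
   0, and x prefers its queue.  If no machine allows this for either job,
   placing the jobs on different machines is an equilibrium: a deviating job
   either starts at 0 again or is queued behind the other job, which by
   assumption does not help.
   (b) For the explicit three-job game each of the 2^3 profiles admits an
   improving unilateral move, found by direct computation. *)
From HB Require Import structures.
From mathcomp Require Import all_boot all_order all_algebra.
From mathcomp Require Import reals lra.
From Stdlib Require Import FunctionalExtensionality.
Import Order.TTheory GRing.Theory Num.Theory.
Local Open Scope ring_scope.
Set Implicit Arguments. Unset Strict Implicit.

Lemma machine_seq_perm (J M : finType) (pi : M -> J -> nat) (sigma : J -> M)
    (j : M) (l : seq J) :
  injective (pi j) -> perm_eq (enum J) l ->
  machine_seq pi sigma j =
    sort (fun u v => (pi j u <= pi j v)%N) [seq k <- l | sigma k == j].
Proof.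
move=> pi_inj enumJ; apply/perm_sortP.
- by move=> u v; apply: leq_total.
- by move=> u v w; apply: leq_trans.
- by move=> u v /andP [uv vu]; apply: pi_inj; apply/eqP; rewrite eqn_leq uv vu.
- exact: perm_filter.
Qed.

Section TwoJobs.
Variables (R : realType) (J M : finType) (jobs : J -> ndjob R) (s : R).
Variable pi : M -> J -> nat.
Hypothesis pi_inj : forall j, injective (pi j).

Definition solo_completion (i : J) : R := 0 + proc_time (jobs i) 0 / s.

Definition queued_completion (i k : J) : R :=
  solo_completion k + proc_time (jobs i) (solo_completion k) / s.

Lemma two_jobs_completion (sigma : J -> M) (i k : J) :
  i != k -> perm_eq (enum J) [:: i; k] ->
  completion jobs (fun _ => s) pi sigma i =
  if (sigma k == sigma i) && (pi (sigma i) k < pi (sigma i) i)%N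
  then queued_completion i k else solo_completion i.
Proof.
move=> ik enumJ; rewrite /completion.
rewrite (machine_seq_perm _ (@pi_inj (sigma i)) enumJ) /= eqxx.
case: (sigma k == sigma i) => /=; last by rewrite eqxx.
rewrite /sort /= leqNgt; case: ltnP => _ /=; last by rewrite eqxx.
by rewrite eq_sym (negbTE ik) eqxx.
Qed.

Variables x y : J.
Hypotheses (xy : x != y) (enum_xy : perm_eq (enum J) [:: x; y]).

Let yx : y != x. Proof. by rewrite eq_sym. Qed.

Let enum_yx : perm_eq (enum J) [:: y; x].
Proof. by rewrite (perm_trans enum_xy) // -(perm_rot 1). Qed.

Let job_cases (t : J) : t = x \/ t = y.
Proof.
have : t \in [:: x; y] by rewrite -(perm_mem enum_xy) mem_enum.
by rewrite !inE => /orP [/eqP|/eqP]; auto.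
Qed.

Lemma stacked_NE (j : M) :
  (pi j y < pi j x)%N -> queued_completion x y < solo_completion x ->
  pure_NE jobs (fun _ => s) pi (fun _ => j).
Proof.
move=> yx_j queue_better i j'; case: (job_cases i) => ->.
  rewrite !(two_jobs_completion _ xy enum_xy) /deviate eqxx (negbTE yx) eqxx.
  rewrite yx_j /=; case: ifP => _; first by rewrite ltxx.
  by move=> /(lt_trans queue_better); rewrite ltxx.
have xy_j : (pi j x < pi j y)%N = false by rewrite ltnNge ltnW.
rewrite !(two_jobs_completion _ yx enum_yx) /deviate eqxx (negbTE xy) eqxx xy_j.
by case: eqP => [<-|_] /=; rewrite ?xy_j ltxx.
Qed.

Lemma split_NE (j0 j1 : M) : j0 != j1 ->
  (forall j, (pi j y < pi j x)%N -> ~ queued_completion x y < solo_completion x) ->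
  (forall j, (pi j x < pi j y)%N -> ~ queued_completion y x < solo_completion y) ->
  pure_NE jobs (fun _ => s) pi (fun t => if t == x then j0 else j1).
Proof.
move=> j01 no_queue_x no_queue_y i j'; case: (job_cases i) => ->.
  rewrite !(two_jobs_completion _ xy enum_xy) /deviate eqxx (negbTE yx).
  rewrite [j1 == j0]eq_sym (negbTE j01) /=.
  by case: ifP => [/andP [_ /no_queue_x]|_] //; rewrite ltxx.
rewrite !(two_jobs_completion _ yx enum_yx) /deviate eqxx (negbTE xy) eqxx.
rewrite (negbTE yx) (negbTE j01) /=.
by case: ifP => [/andP [_ /no_queue_y]|_] //; rewrite ltxx.
Qed.

End TwoJobs.

Lemma two_jobs_NE_exists (R : realType) (J : finType) (jobs : J -> ndjob R)
    (s : R) (pi : 'I_2 -> J -> nat) :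
  #|J| = 2%N -> (forall j, priority_list (pi j)) ->
  exists sigma : J -> 'I_2, pure_NE jobs (fun _ => s) pi sigma.
Proof.
move=> cardJ prio; have pi_inj j : injective (pi j) by case: (prio j).
have := enum_uniq J; have : size (enum J) = 2%N by rewrite -cardT.
case enumJ: (enum J) => [|x [|y [|? ?]]] // _; rewrite /= inE andbT => xy.
have enum_xy : perm_eq (enum J) [:: x; y] by rewrite enumJ.
have enum_yx : perm_eq (enum J) [:: y; x] by rewrite enumJ -(perm_rot 1).
have yx : y != x by rewrite eq_sym.
pose queue_helps u v := [exists j : 'I_2, (pi j v < pi j u)%N &&
  (queued_completion jobs s u v < solo_completion jobs s u)].
have [/existsP [j /andP [vu better]]|no_x] := boolP (queue_helps x y).
  by exists (fun _ => j); apply: (stacked_NE pi_inj xy enum_xy).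
have [/existsP [j /andP [vu better]]|no_y] := boolP (queue_helps y x).
  by exists (fun _ => j); apply: (stacked_NE pi_inj yx enum_yx).
exists (fun t => if t == x then ord0 else ord_max).
apply: (split_NE pi_inj xy enum_xy) => // j vu better.
- by apply: (negP no_x); apply/existsP; exists j; rewrite vu better.
- by apply: (negP no_y); apply/existsP; exists j; rewrite vu better.
Qed.

Definition job_u : 'I_3 := @Ordinal 3 0 isT.
Definition job_v : 'I_3 := @Ordinal 3 1 isT.
Definition job_w : 'I_3 := @Ordinal 3 2 isT.
Definition machine1 : 'I_2 := @Ordinal 2 0 isT.
Definition machine2 : 'I_2 := @Ordinal 2 1 isT.

Definition ex_profile (mu mv mw : 'I_2) (k : 'I_3) : 'I_2 :=
  match nat_of_ord k with 0%N => mu | 1%N => mv | _ => mw end.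

Lemma ex_profileE (sigma : 'I_3 -> 'I_2) :
  sigma = ex_profile (sigma job_u) (sigma job_v) (sigma job_w).
Proof.
by apply: functional_extensionality => -[[|[|[|?]]] k3] //=; congr sigma; apply: val_inj.
Qed.

Lemma enum_ord3 : perm_eq (enum 'I_3) [:: job_u; job_v; job_w].
Proof.
apply: uniq_perm; [exact: enum_uniq | by [] | move=> k].
by rewrite mem_enum; case: k => [[|[|[|?]]] ?].
Qed.

Lemma ex_pi_inj (j : 'I_2) : injective (ex_pi j).
Proof.
move=> [[|[|[|?]]] ?] [[|[|[|?]]] ?] //; rewrite /ex_pi /=;
  by case: (nat_of_ord j == 0%N) => //= _; apply: val_inj.
Qed.

Lemma ex_priority_list (j : 'I_2) : priority_list (ex_pi j).
Proof.
split; first exact: ex_pi_inj.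
by move=> [[|[|[|?]]] ?] //; rewrite card_ord /ex_pi; case: (nat_of_ord j == 0%N).
Qed.

Lemma ex_valid (R : realType) (i : 'I_3) : valid_ndjob (ex_jobs R i).
Proof. by case: i => [[|[|[|?]]] ?]; rewrite /valid_ndjob /ex_jobs /=; lra. Qed.

Lemma ex_machine_seq (sigma : 'I_3 -> 'I_2) (j : 'I_2) :
  machine_seq ex_pi sigma j =
    sort (fun u v => (ex_pi j u <= ex_pi j v)%N)
         [seq k <- [:: job_u; job_v; job_w] | sigma k == j].
Proof. exact: (machine_seq_perm sigma (@ex_pi_inj j) enum_ord3). Qed.

Ltac simpl_max := repeat match goal with |- context [Num.max ?a ?b] =>
  (rewrite (@max_r _ _ a b); last by lra) ||
  (rewrite (@max_l _ _ a b); last by lra) end.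

Ltac improving_move i j := move/(_ i j); apply;
  rewrite /completion !ex_machine_seq /= /proc_time /ex_jobs /=
          !divr1 !add0r ?mulr0 ?subr0;
  simpl_max; lra.

Lemma ex_no_NE (R : realType) (sigma : 'I_3 -> 'I_2) :
  ~ pure_NE (ex_jobs R) (fun _ => 1) ex_pi sigma.
Proof.
rewrite (ex_profileE sigma).
case: (sigma job_u) => [[|[|?]] ?] //; case: (sigma job_v) => [[|[|?]] ?] //;
  case: (sigma job_w) => [[|[|?]] ?] //.
- improving_move job_w machine2.
- improving_move job_v machine2.
- improving_move job_w machine2.
- improving_move job_u machine2.
- improving_move job_u machine1.
- improving_move job_u machine1.
- improving_move job_v machine1.
- improving_move job_v machine1.
Qed.

Theorem theorem6 (R : realType) :
  (forall (J : finType) (jobs : J -> ndjob R) (pi : 'I_2 -> J -> nat),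
      #|J| = 2%N ->
      (forall i, valid_ndjob (jobs i)) ->
      (forall j, priority_list (pi j)) ->
      exists sigma : J -> 'I_2, pure_NE jobs (fun _ => 1) pi sigma)
  /\
  (exists (J : finType) (jobs : J -> ndjob R) (pi : 'I_2 -> J -> nat),
      [/\ #|J| = 3%N, (forall i, valid_ndjob (jobs i)),
          (forall j, priority_list (pi j)) &
          forall sigma : J -> 'I_2, ~ pure_NE jobs (fun _ => 1) pi sigma])
  /\
  ((forall i, valid_ndjob (ex_jobs R i)) /\
   (forall j, priority_list (ex_pi j)) /\
   forall sigma : 'I_3 -> 'I_2, ~ pure_NE (ex_jobs R) (fun _ => 1) ex_pi sigma).
Proof.
split; first by move=> J jobs pi cardJ _ prio; exact: two_jobs_NE_exists.
split; last by split; [exact: ex_valid | split; [exact: ex_priority_list | exact: ex_no_NE]].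
exists 'I_3, (ex_jobs R), ex_pi; split.
- exact: card_ord.
- exact: ex_valid.
- exact: ex_priority_list.
- exact: ex_no_NE.
Qed.
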